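(* Let $R$ be an ideal QRF with a faithful, possibly projective, unitary representation $U_R(G)=\mathcal{G}_R$ of $G=\mathbb{Z}_2^{\times(n-k)}$ on $\mathcal{H}_R\simeq(\mathbb{C}^2)^{\otimes(n-k)}$ such that $-I_R\notin\mathcal{G}_R$. For each covariant orthonormal orientation basis $\{\ket g_R\}_{g\in G}$ of $\mathcal{H}_R$, the map $\hat U_R:\hat G\to\mathrm{Aut}(\mathcal{H}_R)$, $\hat U^\chi_R=\sum_{g\in G}\chi(g)\ket g\!\bra g_R$, is a unitary representation of $\hat G$ that is dual to $\mathcal{G}_R$: $U^g_R\hat U^\chi_R=\chi(g)\hat U^\chi_RU^g_R$ for all $g\in G$, $\chi\in\hat G$. Conversely, each unitary representation $\hat U_R$ of $\hat G$ on $\mathcal{H}_R$ dual to $\mathcal{G}_R$ gives rise to a covariant orthonormal orientation basis of $\mathcal{H}_R$. Furthermore, the elements of any such $\hat{\mathcal{G}}_R=\hat U_R(\hat G)$ square to the identity and satisfy $\mathrm{Tr}(\hat U^\chi_R\hat U^\eta_R)=2^{n-k}\delta_{\chi,\eta}$ for all $\chi,\eta\in\hat G$.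
   Context: $G=\mathbb{Z}_2^{\times(n-k)}$ (neutral element $e$) and $\hat G$ is its group of characters $\chi:G\to\{\pm1\}$ (pointwise product). A possibly projective unitary representation satisfies $U^g_RU^h_R=c(g,h)U^{gh}_R$ with phases $|c(g,h)|=1$, $U^e_R=I_R$, $c(g,e)=c(e,g)=1$, the cocycle condition $c(g,hk)c(h,k)=c(g,h)c(gh,k)$, and (by a choice of phases assumed throughout) $c(g,g^{-1})=1$ for all $g$. A covariant orthonormal orientation basis is an orthonormal basis $\{\ket g_R\}_{g\in G}$ of $\mathcal{H}_R$ with $U^g_R\ket h_R=c(g,h)\ket{gh}_R$ for all $g,h$; a QRF admitting one is called ideal. A unitary representation $\hat U_R$ of $\hat G$ on $\mathcal{H}_R$ is dual to $\mathcal{G}_R$ if $U^g_R\hat U^\chi_R=\chi(g)\hat U^\chi_RU^g_R$ for all $g,\chi$. *)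

From HB Require Import structures.
From mathcomp Require Import all_boot all_order all_algebra.
Set Implicit Arguments. Unset Strict Implicit. Unset Printing Implicit Defensive.
Import Order.TTheory GRing.Theory Num.Theory.
Local Open Scope ring_scope.

(* The group G = Z_2^m (m = n - k), written additively: neutral element 0,
   group law +, inverse g^{-1} = -g (= g). *)
Definition Zgrp (m : nat) : finType := 'rV['F_2]_m.

Definition adjmx (C : numClosedFieldType) (p q : nat) (A : 'M[C]_(p, q)) : 'M[C]_(q, p) :=
  (map_mx Num.conj A)^T.

Definition unitary (C : numClosedFieldType) (d : nat) (A : 'M[C]_d) : Prop :=
  A *m adjmx A = 1%:M /\ adjmx A *m A = 1%:M.

(* Possibly projective unitary representation of G with cocycle c,
   including the phase conventions fixed in the paper. *)
Definition proj_unitary_rep (C : numClosedFieldType) (m : nat)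
    (U : Zgrp m -> 'M[C]_(2 ^ m)) (c : Zgrp m -> Zgrp m -> C) : Prop :=
  (forall g, unitary (U g)) /\
  (forall g h, U g *m U h = c g h *: U (g + h)) /\
  (forall g h, `|c g h| = 1) /\
  U 0 = 1%:M /\
  (forall g, c g 0 = 1 /\ c 0 g = 1) /\
  (forall g h k, c g (h + k) * c h k = c g h * c (g + h) k) /\
  (forall g, c g (- g) = 1).

Definition is_character (C : numClosedFieldType) (m : nat) (chi : {ffun Zgrp m -> C}) : Prop :=
  (forall g h, chi (g + h) = chi g * chi h) /\ (forall g, chi g = 1 \/ chi g = -1).

Definition char_mul (C : numClosedFieldType) (m : nat) (chi eta : {ffun Zgrp m -> C})
  : {ffun Zgrp m -> C} := [ffun g => chi g * eta g].

(* A unitary representation of \hat G on H_R (only its values on characters matter). *)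
Definition hat_unitary_rep (C : numClosedFieldType) (m : nat)
    (Uh : {ffun Zgrp m -> C} -> 'M[C]_(2 ^ m)) : Prop :=
  (forall chi, is_character chi -> unitary (Uh chi)) /\
  (forall chi eta, is_character chi -> is_character eta ->
     Uh (char_mul chi eta) = Uh chi *m Uh eta).

Definition dual_to (C : numClosedFieldType) (m : nat)
    (U : Zgrp m -> 'M[C]_(2 ^ m)) (Uh : {ffun Zgrp m -> C} -> 'M[C]_(2 ^ m)) : Prop :=
  forall g chi, is_character chi -> U g *m Uh chi = chi g *: (Uh chi *m U g).

(* Covariant orthonormal orientation basis {|g>}_{g in G} (|G| = 2^m = dim H_R,
   so an orthonormal family indexed by G is a basis). *)
Definition covariant_onb (C : numClosedFieldType) (m : nat)
    (U : Zgrp m -> 'M[C]_(2 ^ m)) (c : Zgrp m -> Zgrp m -> C)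
    (b : Zgrp m -> 'cV[C]_(2 ^ m)) : Prop :=
  (forall g h, adjmx (b g) *m b h = (g == h)%:R%:M) /\
  (forall g h, U g *m b h = c g h *: b (g + h)).

Definition hat_from_basis (C : numClosedFieldType) (m : nat)
    (b : Zgrp m -> 'cV[C]_(2 ^ m)) (chi : {ffun Zgrp m -> C}) : 'M[C]_(2 ^ m) :=
  \sum_(g : Zgrp m) chi g *: (b g *m adjmx (b g)).

From HB Require Import structures.
From mathcomp Require Import all_boot all_order all_algebra.
Import Order.TTheory GRing.Theory Num.Theory.
Set Implicit Arguments. Unset Strict Implicit. Unset Printing Implicit Defensive.
Local Open Scope ring_scope.

(* A covariant orthonormal basis diagonalises \hat U^chi, with eigenvalue chi(g) on |g>;
   since U^g maps |h> into the line of |g + h> and chi(g + h) = chi(g) chi(h), duality can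
   be checked on basis vectors.  Conversely, if \hat U is dual to U, then \hat U^psi
   anticommutes with U^g whenever psi(g) = -1, so it is traceless unless psi = 1.  Hence
   the sum of all \hat U^chi has trace 2^m and is nonzero; its columns are fixed by every
   \hat U^chi, and for a unit fixed vector v duality makes U^g v an eigenvector of each
   \hat U^chi with eigenvalue chi(g).  Characters separate the points of G, so these
   vectors are orthonormal.  The squares and traces follow from
   \hat U^chi \hat U^eta = \hat U^(chi eta). *)

Section Adjoint.
Variable C : numClosedFieldType.

Lemma adjmxM p q r (A : 'M[C]_(p, q)) (B : 'M[C]_(q, r)) :
  adjmx (A *m B) = adjmx B *m adjmx A.
Proof. by rewrite /adjmx map_mxM trmx_mul. Qed.

Lemma adjmxZ p q a (A : 'M[C]_(p, q)) : adjmx (a *: A) = a^* *: adjmx A.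
Proof. by rewrite /adjmx map_mxZ linearZ. Qed.

Lemma adjmxK p q (A : 'M[C]_(p, q)) : adjmx (adjmx A) = A.
Proof. by apply/matrixP=> i j; rewrite /adjmx !mxE conjCK. Qed.

Lemma adjmx_sum p q (I : finType) (F : I -> 'M[C]_(p, q)) :
  adjmx (\sum_i F i) = \sum_i adjmx (F i).
Proof. by rewrite /adjmx map_mx_sum linear_sum. Qed.

Lemma adjmx_mulmx_self n (v : 'cV[C]_n) :
  (adjmx v *m v) 0 0 = \sum_i `|v i 0| ^+ 2.
Proof. by rewrite mxE; apply: eq_bigr => i _; rewrite /adjmx !mxE normCK mulrC. Qed.

Lemma adjmx_mulmx_self_eq0 n (v : 'cV[C]_n) : ((adjmx v *m v) 0 0 == 0) = (v == 0).
Proof.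
apply/idP/eqP => [|->]; last by rewrite mulmx0 mxE.
rewrite adjmx_mulmx_self => /eqP/psumr_eq0P v0.
apply/matrixP=> i j; rewrite (ord1 j) mxE.
by apply/eqP; rewrite -normr_eq0 -sqrf_eq0 v0 // => k _; rewrite exprn_ge0.
Qed.

Lemma cV_normalize n (v : 'cV[C]_n) : v != 0 ->
  exists k : C, adjmx (k *: v) *m (k *: v) = 1%:M.
Proof.
rewrite -adjmx_mulmx_self_eq0; set s := _ 0 0 => s_neq0.
have s_ge0 : 0 <= s by rewrite /s adjmx_mulmx_self sumr_ge0 // => i _; rewrite exprn_ge0.
have r_neq0 : sqrtC s != 0 by rewrite sqrtC_eq0.
have r_conj : ((sqrtC s)^-1)^* = (sqrtC s)^-1 by rewrite geC0_conj // invr_ge0 sqrtC_ge0.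
exists (sqrtC s)^-1.
rewrite adjmxZ -scalemxAl -scalemxAr scalerA [adjmx v *m v]mx11_scalar -/s r_conj.
by rewrite scale_scalar_mx -{3}(sqrtCK s) expr2 mulrACA mulVf // mulr1.
Qed.

Lemma adjmx_eigen_orthogonal n (H : 'M[C]_n) (u w : 'cV[C]_n) a b :
  adjmx H = H -> a^* = a -> H *m u = a *: u -> H *m w = b *: w -> a != b ->
  adjmx u *m w = 0.
Proof.
move=> H_herm a_real Hu Hw ab.
have : (a - b) *: (adjmx u *m w) = 0.
  rewrite scalerBl scalemxAl -a_real -adjmxZ -Hu adjmxM H_herm -mulmxA Hw.
  by rewrite scalemxAr subrr.
by move/eqP; rewrite scaler_eq0 subr_eq0 (negbTE ab) => /eqP.
Qed.
End Adjoint.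

Lemma mxtrace_anticomm_eq0 (R : numFieldType) n (A B : 'M[R]_n) :
  A \in unitmx -> A *m B = - (B *m A) -> \tr B = 0.
Proof.
move=> A_unit AB; apply/eqP; rewrite -eqNr; apply/eqP.
by rewrite -{2}(mulKmx A_unit B) mxtrace_mulC AB mulNmx (mulmxK A_unit) raddfN.
Qed.

Section OrthonormalFamily.
Variables (C : numClosedFieldType) (n : nat) (I : finType) (b : I -> 'cV[C]_n).
Hypothesis b_orthonormal : forall i j, adjmx (b i) *m b j = (i == j)%:R%:M.
Hypothesis card_I : #|I| = n.

Lemma orthonormal_complete : \sum_i b i *m adjmx (b i) = 1%:M.
Proof.
pose idx (j : 'I_n) : I := enum_val (cast_ord (esym card_I) j).
have idx_bij : bijective idx.
  exists (fun i => cast_ord card_I (enum_rank i)) => [j|i];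
  by rewrite /idx ?enum_valK ?cast_ordKV // cast_ordK enum_rankK.
pose B : 'M[C]_n := \matrix_(k, j) b (idx j) k 0.
have BB : adjmx B *m B = 1%:M.
  apply/matrixP=> j l; rewrite !mxE.
  have := congr1 (fun M : 'M_1 => M 0 0) (b_orthonormal (idx j) (idx l)).
  rewrite /= !mxE (inj_eq (bij_inj idx_bij)) mulr1n => <-.
  by apply: eq_bigr => k _; rewrite /adjmx !mxE.
rewrite -(mulmx1C BB); apply/matrixP=> k l; rewrite summxE !mxE (reindex idx) /=.
  by apply: eq_bigr => j _; rewrite /adjmx !mxE big_ord1 !mxE.
by case: idx_bij => idx' idxK idx'K; exists idx' => ? _.
Qed.

Lemma orthonormal_mx_ext p (A B : 'M[C]_(p, n)) :
  (forall i, A *m b i = B *m b i) -> A = B.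
Proof.
move=> AB; rewrite -[A]mulmx1 -[B]mulmx1 -orthonormal_complete !mulmx_sumr.
by apply: eq_bigr => i _; rewrite !mulmxA AB.
Qed.
End OrthonormalFamily.

Lemma card_Zgrp m : #|Zgrp m| = (2 ^ m)%N.
Proof. by rewrite card_mx card_Fp // mul1n. Qed.

Section Characters.
Variables (C : numClosedFieldType) (m : nat).
Implicit Types (chi eta : {ffun Zgrp m -> C}) (g h : Zgrp m).

Definition char1 : {ffun Zgrp m -> C} := [ffun=> 1].

Lemma char1_character : is_character char1.
Proof. by split=> [g h|g]; rewrite !ffunE ?mulr1 //; left. Qed.

Lemma char_mulxx chi g : is_character chi -> chi g * chi g = 1.
Proof. by case=> _ /(_ g) [] ->; rewrite ?mulr1 ?mulrNN ?mulr1. Qed.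

Lemma char_eval0 chi : is_character chi -> chi 0 = 1.
Proof. by move=> chiC; rewrite -(char_mulxx 0 chiC) -(proj1 chiC) addr0. Qed.

Lemma char_conj chi g : is_character chi -> (chi g)^* = chi g.
Proof. by case=> _ /(_ g) [] ->; rewrite ?rmorphN ?rmorph1 ?conjC1. Qed.

Lemma char_mul_character chi eta :
  is_character chi -> is_character eta -> is_character (char_mul chi eta).
Proof.
move=> [chiM chi_pm] [etaM eta_pm]; split=> [g h|g]; rewrite !ffunE.
  by rewrite chiM etaM mulrACA.
by case: (chi_pm g) (eta_pm g) => -> [] ->; rewrite ?mulrNN ?mulr1 ?mul1r; by [left|right].
Qed.

Lemma char_mul1 chi : char_mul chi char1 = chi.
Proof. by apply/ffunP=> g; rewrite !ffunE mulr1. Qed.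

Lemma char_mul_eq1 chi eta : is_character chi -> is_character eta ->
  (char_mul chi eta == char1) = (chi == eta).
Proof.
move=> chiC etaC; apply/eqP/eqP => [chi_eta|<-]; last first.
  by apply/ffunP=> g; rewrite !ffunE char_mulxx.
apply/ffunP=> g; have /ffunP/(_ g) := chi_eta; rewrite !ffunE => chi_etaE.
by rewrite -[chi g]mulr1 -(char_mulxx g etaC) mulrA chi_etaE mul1r.
Qed.

Lemma char_neq1 chi : is_character chi -> chi != char1 -> exists g, chi g = -1.
Proof.
case=> _ chi_pm chi_neq1.
have [g chi_g | chi_1] := pickP (fun g => chi g != 1).
  by exists g; case: (chi_pm g) chi_g => ->; rewrite ?eqxx.
by case/eqP: chi_neq1; apply/ffunP=> g; rewrite ffunE; apply/eqP/negbFE/chi_1.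
Qed.
End Characters.

Section CharactersOfZgrp.
Variables (C : numClosedFieldType) (m : nat).
Implicit Types (chi : {ffun Zgrp m -> C}) (a g h : Zgrp m).

Lemma F2_cases (x : 'F_2) : x = 0 \/ x = 1.
Proof. by case: x => [[|[|//]]] ?; [left|right]; apply/val_inj. Qed.

Definition sgnF2 (x : 'F_2) : C := if x == 0 then 1 else -1.

Lemma sgnF2D (x y : 'F_2) : sgnF2 (x + y) = sgnF2 x * sgnF2 y.
Proof.
by case: (F2_cases x) (F2_cases y) => -> [] ->; rewrite /sgnF2 /= ?mulrNN ?mulr1 ?mul1r.
Qed.

Lemma sgnF2_inj : injective sgnF2.
Proof.
have N1_neq1 : (-1 : C) != 1 by rewrite eqNr oner_eq0.
move=> x y; case: (F2_cases x) (F2_cases y) => -> [] -> //= /eqP; rewrite /sgnF2 /=.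
  by rewrite eq_sym (negbTE N1_neq1).
by rewrite (negbTE N1_neq1).
Qed.

Definition dotG a g : 'F_2 := (a *m g^T) 0 0.

Definition chr a : {ffun Zgrp m -> C} := [ffun g => sgnF2 (dotG a g)].

Definition evec (i : 'I_m) : Zgrp m := delta_mx 0 i.

Lemma dotG_evecl i g : dotG (evec i) g = g 0 i.
Proof. by rewrite /dotG /evec -rowE !mxE. Qed.

Lemma dotG_evecr a i : dotG a (evec i) = a 0 i.
Proof. by rewrite /dotG /evec trmx_delta -colE !mxE. Qed.

Lemma chr_character a : is_character (chr a).
Proof.
split=> [g h|g]; rewrite !ffunE.
  by rewrite /dotG linearD mulmxDr [(_ + _ : 'M_1) 0 0]mxE sgnF2D.
by rewrite /sgnF2; case: ifP; [left|right].
Qed.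

Lemma chr_mul a a' : char_mul (chr a) (chr a') = chr (a + a').
Proof.
by apply/ffunP=> g; rewrite !ffunE /dotG mulmxDl [(_ + _ : 'M_1) 0 0]mxE sgnF2D.
Qed.

Lemma chr_eq1 a : (chr a == char1 C m) = (a == 0).
Proof.
apply/eqP/eqP => [chr_a1|->]; last first.
  by apply/ffunP=> g; rewrite !ffunE /dotG mul0mx mxE /sgnF2 eqxx.
apply/matrixP=> i j; rewrite (ord1 i) mxE; apply: sgnF2_inj.
by have /ffunP/(_ (evec j)) := chr_a1; rewrite !ffunE dotG_evecr /sgnF2 eqxx.
Qed.

Lemma chr_separates g h : g != h -> exists a, chr a g != chr a h.
Proof.
move=> gh; have [i g_i_neq | g_eq] := pickP (fun i => g 0 i != h 0 i).
  by exists (evec i); rewrite !ffunE !dotG_evecl (inj_eq sgnF2_inj).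
case/eqP: gh; apply/matrixP=> i j; rewrite (ord1 i).
by move: (g_eq j) => /negbFE/eqP.
Qed.

Lemma character_evec_ext chi chi' : is_character chi -> is_character chi' ->
  (forall i, chi (evec i) = chi' (evec i)) -> chi = chi'.
Proof.
move=> chiC chi'C chi_chi'; apply/ffunP=> g.
rewrite [g](matrix_sum_delta g) big_ord1.
rewrite (big_morph chi (proj1 chiC) (char_eval0 chiC)).
rewrite (big_morph chi' (proj1 chi'C) (char_eval0 chi'C)).
apply: eq_bigr => i _; case: (F2_cases (g 0 i)) => ->; rewrite ?scale0r ?scale1r //.
by rewrite (char_eval0 chiC) (char_eval0 chi'C).
Qed.

Lemma characterP chi : is_character chi -> exists a, chi = chr a.
Proof.
move=> chiC; exists (\row_i (if chi (evec i) == 1 then 0 else 1)).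
apply: character_evec_ext (chr_character _) _ => // i.
rewrite ffunE dotG_evecr mxE /sgnF2.
by case: chiC => _ /(_ (evec i)) [] ->; rewrite ?eqxx // eqNr oner_eq0.
Qed.
End CharactersOfZgrp.

Section HatFromBasis.
Variables (C : numClosedFieldType) (m : nat) (b : Zgrp m -> 'cV[C]_(2 ^ m)).
Hypothesis b_orthonormal : forall g h, adjmx (b g) *m b h = (g == h)%:R%:M.
Implicit Types chi eta : {ffun Zgrp m -> C}.

Lemma hat_from_basis_eigen chi h : hat_from_basis b chi *m b h = chi h *: b h.
Proof.
rewrite /hat_from_basis mulmx_suml (bigD1 h) //= big1 ?addr0 => [|g g_neq_h].
  by rewrite -scalemxAl -mulmxA b_orthonormal eqxx mul_mx_scalar scale1r.
by rewrite -scalemxAl -mulmxA b_orthonormal (negbTE g_neq_h) mul_mx_scalar !scale0r scaler0.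
Qed.

Lemma hat_from_basis_adj chi :
  is_character chi -> adjmx (hat_from_basis b chi) = hat_from_basis b chi.
Proof.
move=> chiC; rewrite adjmx_sum; apply: eq_bigr => g _.
by rewrite adjmxZ adjmxM adjmxK char_conj.
Qed.

Lemma hat_from_basis_unitary_rep : hat_unitary_rep (hat_from_basis b).
Proof.
have b_ext := orthonormal_mx_ext b_orthonormal (card_Zgrp m).
split=> [chi chiC | chi eta _ _]; last first.
  apply: b_ext => h; rewrite -mulmxA hat_from_basis_eigen hat_from_basis_eigen.
  by rewrite -scalemxAr hat_from_basis_eigen scalerA ffunE mulrC.
have hat_sqr : hat_from_basis b chi *m hat_from_basis b chi = 1%:M.
  apply: b_ext => h; rewrite -mulmxA hat_from_basis_eigen -scalemxAr.
  by rewrite hat_from_basis_eigen scalerA char_mulxx // scale1r mul1mx.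
by rewrite /unitary hat_from_basis_adj.
Qed.

Variables (U : Zgrp m -> 'M[C]_(2 ^ m)) (c : Zgrp m -> Zgrp m -> C).
Hypothesis U_covariant : forall g h, U g *m b h = c g h *: b (g + h).

Lemma hat_from_basis_dual : dual_to U (hat_from_basis b).
Proof.
move=> g chi chiC; apply: (orthonormal_mx_ext b_orthonormal (card_Zgrp m)) => h.
rewrite -mulmxA hat_from_basis_eigen -scalemxAr U_covariant.
rewrite -scalemxAl -mulmxA U_covariant -scalemxAr hat_from_basis_eigen !scalerA.
by congr (_ *: _); rewrite (proj1 chiC) mulrAC mulrA char_mulxx // mul1r.
Qed.
End HatFromBasis.

Section DualRepresentation.
Variables (C : numClosedFieldType) (m : nat).
Variable Uh : {ffun Zgrp m -> C} -> 'M[C]_(2 ^ m).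
Hypothesis Uh_rep : hat_unitary_rep Uh.
Implicit Types chi eta : {ffun Zgrp m -> C}.

Lemma hat_rep1 : Uh (char1 C m) = 1%:M.
Proof.
case: Uh_rep => Uh_unitary Uh_mul; have [Uh1_adj _] := Uh_unitary _ (char1_character C m).
have := Uh_mul _ _ (char1_character C m) (char1_character C m).
rewrite char_mul1 => Uh1_idem.
by rewrite -Uh1_adj {2}Uh1_idem -mulmxA Uh1_adj mulmx1.
Qed.

Lemma hat_rep_sqr chi : is_character chi -> Uh chi *m Uh chi = 1%:M.
Proof.
move=> chiC; rewrite -(proj2 Uh_rep) //.
have /eqP -> : char_mul chi chi == char1 C m by rewrite char_mul_eq1.
exact: hat_rep1.
Qed.

Lemma hat_rep_adj chi : is_character chi -> adjmx (Uh chi) = Uh chi.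
Proof.
move=> chiC; have [Uh_adj _] := proj1 Uh_rep _ chiC.
by rewrite -[adjmx _]mul1mx -(hat_rep_sqr chiC) -mulmxA Uh_adj mulmx1.
Qed.

Variable U : Zgrp m -> 'M[C]_(2 ^ m).
Hypothesis U_unitary : forall g, unitary (U g).
Hypothesis Uh_dual : dual_to U Uh.

Lemma mxtrace_hat_rep chi : is_character chi ->
  \tr (Uh chi) = (2 ^ m)%:R * (chi == char1 C m)%:R.
Proof.
move=> chiC; have [->|chi_neq1] := eqVneq chi (char1 C m).
  by rewrite hat_rep1 mxtrace1 mulr1.
have [g chi_g] := char_neq1 chiC chi_neq1.
have U_unit : U g \in unitmx by case: (mulmx1_unit (proj1 (U_unitary g))).
by rewrite mulr0 (mxtrace_anticomm_eq0 U_unit) // Uh_dual // chi_g scaleN1r.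
Qed.

Lemma mxtrace_hat_rep_mul chi eta : is_character chi -> is_character eta ->
  \tr (Uh chi *m Uh eta) = (2 ^ m)%:R * (chi == eta)%:R.
Proof.
move=> chiC etaC; rewrite -(proj2 Uh_rep) // -(char_mul_eq1 chiC etaC).
exact/mxtrace_hat_rep/char_mul_character.
Qed.

Lemma hat_rep_sum_invariant chi : is_character chi ->
  Uh chi *m \sum_a Uh (chr C a) = \sum_a Uh (chr C a).
Proof.
move=> /characterP [a' ->]; rewrite mulmx_sumr [RHS](reindex_inj (addrI a')).
by apply: eq_bigr => a _; rewrite -chr_mul (proj2 Uh_rep) //; apply: chr_character.
Qed.

Lemma mxtrace_hat_rep_sum : \tr (\sum_a Uh (chr C a)) = (2 ^ m)%:R.
Proof.
have tr_chr a : \tr (Uh (chr C a)) = (2 ^ m)%:R * (a == 0)%:R.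
  by rewrite mxtrace_hat_rep ?chr_eq1 //; apply: chr_character.
rewrite raddf_sum (bigD1 0) //= big1 ?addr0 => [|a a_neq0].
  by rewrite tr_chr eqxx mulr1.
by rewrite tr_chr (negbTE a_neq0) mulr0.
Qed.

Lemma hat_rep_fixed_unit_vector : exists v : 'cV[C]_(2 ^ m),
  adjmx v *m v = 1%:M /\ forall chi, is_character chi -> Uh chi *m v = v.
Proof.
set P := \sum_a Uh (chr C a).
have P_neq0 : P != 0.
  apply/eqP => P0; have := mxtrace_hat_rep_sum; rewrite -/P P0 mxtrace0 => /eqP.
  by rewrite eq_sym pnatr_eq0 expn_eq0.
have [j Pj_neq0] : exists j, col j P != 0.
  have [j ? | P_col0] := pickP (fun j => col j P != 0); first by exists j.
  case/eqP: P_neq0; apply/matrixP=> i j.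
  by move: (P_col0 j) => /negbFE/eqP/matrixP/(_ i 0); rewrite !mxE.
have [k k_unit] := cV_normalize Pj_neq0.
exists (k *: col j P); split=> // chi chiC.
by rewrite -scalemxAr colE mulmxA hat_rep_sum_invariant.
Qed.

Lemma dual_eigen (v : 'cV[C]_(2 ^ m)) chi g :
  (forall eta, is_character eta -> Uh eta *m v = v) -> is_character chi ->
  Uh chi *m (U g *m v) = chi g *: (U g *m v).
Proof.
move=> v_fixed chiC.
rewrite mulmxA -[Uh chi *m U g]scale1r -(char_mulxx g chiC) -scalerA -Uh_dual //.
by rewrite -scalemxAl -mulmxA v_fixed.
Qed.

Variable c : Zgrp m -> Zgrp m -> C.
Hypothesis U_mul : forall g h, U g *m U h = c g h *: U (g + h).

Lemma covariant_onb_of_dual : exists b, covariant_onb U c b /\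
  forall chi, is_character chi -> Uh chi = hat_from_basis b chi.
Proof.
have [v [v_unit v_fixed]] := hat_rep_fixed_unit_vector.
pose b g := U g *m v.
have b_eigen chi g : is_character chi -> Uh chi *m b g = chi g *: b g.
  exact: dual_eigen.
have b_orthonormal g h : adjmx (b g) *m b h = (g == h)%:R%:M.
  have [<-|g_neq_h] := eqVneq g h.
    by rewrite adjmxM mulmxA -(mulmxA (adjmx v)) (proj2 (U_unitary g)) mulmx1 v_unit.
  have [a chr_gh] := chr_separates C g_neq_h.
  have chrC := chr_character C a.
  rewrite (adjmx_eigen_orthogonal (hat_rep_adj chrC) (char_conj g chrC)
              (b_eigen _ g chrC) (b_eigen _ h chrC) chr_gh).
  by rewrite raddf0.
exists b; split=> [|chi chiC]; first by split=> // g h; rewrite /b mulmxA U_mul -scalemxAl.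
apply: (orthonormal_mx_ext b_orthonormal (card_Zgrp m)) => h.
by rewrite b_eigen // hat_from_basis_eigen.
Qed.
End DualRepresentation.

Theorem mainTheorem6 (C : numClosedFieldType) (m : nat)
    (U : Zgrp m -> 'M[C]_(2 ^ m)) (c : Zgrp m -> Zgrp m -> C) :
  proj_unitary_rep U c ->
  injective U ->
  (forall g, U g <> - 1%:M) ->
  (exists b, covariant_onb U c b) ->
  [/\ (forall b, covariant_onb U c b ->
         hat_unitary_rep (hat_from_basis b) /\ dual_to U (hat_from_basis b)),
      (forall Uh, hat_unitary_rep Uh -> dual_to U Uh ->
         exists b, covariant_onb U c b /\
           forall chi, is_character chi -> Uh chi = hat_from_basis b chi) &
      (forall Uh, hat_unitary_rep Uh -> dual_to U Uh ->
         forall chi eta, is_character chi -> is_character eta ->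
           Uh chi *m Uh chi = 1%:M /\
           \tr (Uh chi *m Uh eta) = (2 ^ m)%:R * (chi == eta)%:R)].
Proof.
move=> [U_unitary [U_mul _]] _ _ _; split.
- move=> b [b_orthonormal U_covariant]; split.
    exact: (hat_from_basis_unitary_rep b_orthonormal).
  exact: (hat_from_basis_dual b_orthonormal U_covariant).
- move=> Uh Uh_rep Uh_dual.
  exact: (covariant_onb_of_dual Uh_rep U_unitary Uh_dual U_mul).
- move=> Uh Uh_rep Uh_dual chi eta chiC etaC; split.
    exact: (hat_rep_sqr Uh_rep chiC).
  exact: (mxtrace_hat_rep_mul Uh_rep U_unitary Uh_dual chiC etaC).
Qed.
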